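(* Let $n\ge 2$ and let $\Delta^c(Q_{4n})$ be the conjugacy super commuting graph of the generalized quaternion group $Q_{4n}$. (i) If $n$ is odd, the Sombor spectrum of $\Delta^c(Q_{4n})$ consists of $-(4n-1)\sqrt2$ with multiplicity $1$, $-(2n-1)\sqrt2$ with multiplicity $2n-3$, $-(2n+1)\sqrt2$ with multiplicity $2n-1$, and the three roots (with multiplicity) of \[\big(x-(4n-1)\sqrt2\big)\big(x-(2n-1)(2n-3)\sqrt2\big)\big(x-(2n-1)(2n+1)\sqrt2\big)-8(n-1)(10n^2-6n+1)\big(x-(2n-1)(2n+1)\sqrt2\big)-8n(10n^2-2n+1)\big(x-(2n-1)(2n-3)\sqrt2\big).\] (ii) If $n$ is even, the Sombor spectrum of $\Delta^c(Q_{4n})$ consists of $-(4n-1)\sqrt2$ with multiplicity $1$, $-(2n-1)\sqrt2$ with multiplicity $2n-3$, $-(n+1)\sqrt2$ with multiplicity $2n-2$, and the four roots (with multiplicity) of \[\big(x-(4n-1)\sqrt2\big)\big(x-(n-1)(n+1)\sqrt2\big)^2\big(x-(2n-1)(2n-3)\sqrt2\big)-8(n-1)(10n^2-6n+1)\big(x-(n-1)(n+1)\sqrt2\big)^2-4n(17n^2-6n+2)\big(x-(2n-3)(2n-1)\sqrt2\big)\big(x-(n-1)(n+1)\sqrt2\big).\]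
   Context: For a finite simple graph $\Gamma$ with vertices $u_1,\dots,u_N$, the Sombor matrix $S(\Gamma)$ has $(i,j)$ entry $\sqrt{\deg(u_i)^2+\deg(u_j)^2}$ if $u_i,u_j$ are adjacent and $0$ otherwise; the Sombor spectrum is the multiset of its eigenvalues. $Q_{4n}=\langle a,b: a^{2n}=e,\ a^n=b^2,\ ba=a^{-1}b\rangle$. The conjugacy super commuting graph $\Delta^c(G)$ has vertex set $G$, and distinct $g,h$ are adjacent iff $g,h$ are conjugate in $G$ or there exist distinct $g'$ conjugate to $g$ and $h'$ conjugate to $h$ with $g'h'=h'g'$. *)

From mathcomp Require Import all_boot all_order all_algebra.
Set Implicit Arguments. Unset Strict Implicit. Unset Printing Implicit Defensive.
Import Order.TTheory GRing.Theory Num.Theory.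

(* Concrete model of Q_{4n}: the element a^i b^j (0 <= i < 2n, j in {0,1})
   is encoded as the pair (i, j). *)
Definition Qelt (n : nat) : finType := ('I_(n.*2) * bool)%type.

Lemma ord_pos (m : nat) (i : 'I_m) : 0 < m.
Proof. by case: i => k; case: m. Qed.

(* a^i b^j * a^k b^l = a^(i + (-1)^j k + [j && l] n) b^(j + l),
   using b a^k = a^(-k) b and b^2 = a^n. *)
Definition qmul (n : nat) (x y : Qelt n) : Qelt n :=
  let: (i, j) := x in let: (k, l) := y in
  (@Ordinal (n.*2)
     ((i + (if j then n.*2 - k else k) + (if j && l then n else 0)) %% n.*2)
     (ltn_pmod _ (ord_pos i)),
   xorb j l).

Definition qconj (n : nat) (g h : Qelt n) : bool :=
  [exists x : Qelt n, qmul g x == qmul x h].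

Definition dcadj (n : nat) (g h : Qelt n) : bool :=
  (g != h) &&
  (qconj g h ||
   [exists g' : Qelt n, exists h' : Qelt n,
      [&& qconj g g', qconj h h', g' != h' & qmul g' h' == qmul h' g']]).

Definition dcdeg (n : nat) (g : Qelt n) : nat := #|[set h | dcadj g h]|.

Local Open Scope ring_scope.
Definition sombor_mx (R : rcfType) (n : nat) : 'M[R]_#|Qelt n| :=
  \matrix_(i < #|Qelt n|, j < #|Qelt n|)
    (if dcadj (enum_val i) (enum_val j)
     then Num.sqrt ((dcdeg (enum_val i))%:R ^+ 2 + (dcdeg (enum_val j))%:R ^+ 2)
     else 0).

From mathcomp Require Import all_boot all_order all_algebra.
From mathcomp Require Import zify ring.
Import Order.TTheory GRing.Theory Num.Theory.
Set Implicit Arguments. Unset Strict Implicit. Unset Printing Implicit Defensive.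

(* The conjugacy classes of Q_{4n} = <a, b> fall into four types: the centre
   {1, a^n}, the other powers of a, and the elements a^i b with i even, resp.
   odd.  Two distinct elements are adjacent in Delta^c exactly when their types
   are: every type is adjacent to the centre and to itself, the powers of a to
   each other, and the two b-types to each other iff n is odd (then a^i b
   commutes with a^(i+n) b).  So the Sombor matrix S is the blow-up of a 4 x 4
   weight matrix W along a partition with cells of sizes m = (2, 2n-2, n, n).
   With E the incidence matrix of the partition, x - S = D - E W E^T for a
   diagonal D, and Sylvester's identity det (1 - A B) = det (1 - B A) gives
   det (x - S) = prod_q (x + W_qq)^(m_q - 1) * det (x - Q) for the 4 x 4
   quotient matrix Q, whose determinant is expanded directly. *)

Lemma modn_lt3 d a : 0 < d -> a < 3 * d ->
  [\/ a %% d = a /\ a < d, a %% d = a - d /\ d <= a < 2 * d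
    | a %% d = a - 2 * d /\ 2 * d <= a].
Proof.
move=> d_gt0 a_lt.
have [a_lt1|a_ge1] := ltnP a d; first by apply: Or31; rewrite modn_small.
have [a_lt2|a_ge2] := ltnP a (2 * d).
  apply: Or32; split; last by apply/andP.
  by rewrite -[in LHS](subnK a_ge1) modnDr modn_small //; lia.
apply: Or33; split => //.
by rewrite -[in LHS](subnK a_ge2) addnC modnMDl modn_small //; lia.
Qed.

Ltac case_modn d d_gt0 :=
  repeat match goal with
  | |- context [?a %% d] =>
      case: (@modn_lt3 d a d_gt0 ltac:(lia)) => [[-> ?]|[-> ?]|[-> ?]]
  end.

Lemma sum_odd_ord m : \sum_(i < m.*2) odd i = m.
Proof.
rewrite -(big_mkord xpredT (fun i => nat_of_bool (odd i))).
elim: m => [|m IHm]; first by rewrite big_nil.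
by rewrite doubleS !big_nat_recr //= IHm odd_double /=; lia.
Qed.

Lemma sum_negb_ord m (b : nat -> bool) :
  \sum_(i < m) ~~ b i = m - \sum_(i < m) b i.
Proof.
have : \sum_(i < m) ((~~ b i : nat) + b i) = m.
  by under eq_bigr do rewrite addn_negb; rewrite sum1_card card_ord.
by rewrite big_split /=; lia.
Qed.

Local Open Scope ring_scope.

Lemma det_1_sub_mulmxC (R : comNzRingType) (p q : nat)
    (A : 'M[R]_(p, q)) (B : 'M[R]_(q, p)) :
  \det (1%:M - A *m B) = \det (1%:M - B *m A).
Proof.
have E1 : block_mx 1%:M A B 1%:M =
    block_mx 1%:M 0 B 1%:M *m block_mx 1%:M A 0 (1%:M - B *m A).
  by rewrite mulmx_block !mulmx1 !mul1mx ?mulmx0 ?mul0mx ?addr0 ?add0r addrC subrK.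
have E2 : block_mx 1%:M A B 1%:M =
    block_mx (1%:M - A *m B) A 0 1%:M *m block_mx 1%:M 0 B 1%:M.
  by rewrite mulmx_block !mulmx1 !mul1mx ?mulmx0 ?mul0mx ?addr0 ?add0r subrK.
have := congr1 determinant E1; rewrite {1}E2 !det_mulmx.
by rewrite !det_lblock !det_ublock !det1 !mul1r !mulr1.
Qed.

Lemma horner_char_poly (R : comNzRingType) n (A : 'M[R]_n) (x : R) :
  (char_poly A).[x] = \det (x%:M - A).
Proof.
rewrite /char_poly -[_.[x]]/(horner_eval x _) -det_map_mx; congr (\det _).
apply/matrixP => i j; rewrite !mxE /= horner_evalE.
by rewrite hornerD hornerN hornerMn hornerX hornerC.
Qed.

Lemma poly_eq_gt (R : numDomainType) (b : R) (p q : {poly R}) :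
  (forall x, b < x -> p.[x] = q.[x]) -> p = q.
Proof.
move=> pq; apply/eqP; rewrite -subr_eq0; apply/eqP.
apply: (@roots_geq_poly_eq0 _ _ [seq b + i.+1%:R | i <- iota 0 (size (p - q))]).
- apply/allP => _ /mapP [i _ ->].
  by rewrite /root hornerD hornerN pq ?subrr // ltrDl ltr0Sn.
- by rewrite map_inj_uniq ?iota_uniq // => i j /addrI /eqP; rewrite eqr_nat eqSS => /eqP.
- by rewrite size_map size_iota.
Qed.

(* Matrices are given by nat-indexed functions, so that rewriting with
   [det_mx_col0] stays first-order and can be iterated down to 'M_0. *)
Definition minor_fun (R : Type) (F : nat -> nat -> R) (i j l : nat) : R :=
  F (bump i j) (bump 0 l).

Lemma det_mx_col0 (R : comNzRingType) m (F : nat -> nat -> R) :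
  \det (\matrix_(i < m.+1, j < m.+1) F i j)
  = \sum_(i < m.+1)
      (-1) ^+ i * F i 0%N * \det (\matrix_(j < m, l < m) minor_fun F i j l).
Proof.
rewrite (expand_det_col _ ord0); apply: eq_bigr => i _.
rewrite /cofactor mxE addn0 mulrCA mulrA; congr (_ * \det _).
by apply/matrixP => j l; rewrite !mxE.
Qed.

Lemma sqrt_sqr_double (R : rcfType) (a : R) : 0 <= a ->
  Num.sqrt (a ^+ 2 + a ^+ 2) = a * Num.sqrt 2.
Proof.
move=> a_ge0; have -> : a ^+ 2 + a ^+ 2 = 2 * a ^+ 2 by ring.
by rewrite sqrtrM ?ler0n // sqrtr_sqr ger0_norm // mulrC.
Qed.

Section EquitablePartition.

Variables (R : fieldType) (N k : nat) (p : 'I_N -> 'I_k).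

Definition incidence_mx : 'M[R]_(N, k) := \matrix_(i, q) (p i == q)%:R.

Local Notation E := incidence_mx.
Local Notation cell q := #|[pred i | p i == q]|.

Lemma mulmx_incidence_tr (A : 'M[R]_k) i j :
  (E *m A *m E^T) i j = A (p i) (p j).
Proof.
have EA r : (E *m A) i r = A (p i) r.
  rewrite mxE (bigD1 (p i)) //= big1 => [|q /negPf]; first by rewrite !mxE eqxx mul1r addr0.
  by rewrite mxE eq_sym => ->; rewrite mul0r.
rewrite mxE (bigD1 (p j)) //= big1 => [|q /negPf qpj].
  by rewrite EA !mxE eqxx mulr1 addr0.
by rewrite [E^T _ _]mxE [E _ _]mxE eq_sym qpj mulr0.
Qed.

Lemma tr_incidence_diag_mulmx (d : 'I_k -> R) :
  E^T *m diag_mx (\row_i d (p i)) *m E = diag_mx (\row_q ((cell q)%:R * d q)).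
Proof.
rewrite mul_mx_diag; apply/matrixP => q r; rewrite !mxE.
under eq_bigr do rewrite !mxE.
case: eqVneq => [<-|qr].
  rewrite mulr1n mulr_natl -sumr_const [RHS]big_mkcond /=; apply: eq_bigr => i _.
  by rewrite inE; case: eqP => [->|]; rewrite ?mulr1 ?mul1r ?mul0r.
rewrite mulr0n big1 // => i _.
by case: eqVneq => [->|_]; rewrite ?(negPf qr) /= ?mulr0n ?mulr0 ?mul0r.
Qed.

Definition blowup_mx (W : 'M[R]_k) : 'M[R]_N :=
  \matrix_(i, j) (if i == j then 0 else W (p i) (p j)).

Definition quotient_mx (W : 'M[R]_k) : 'M[R]_k :=
  \matrix_(q, r) ((cell r)%:R * W q r - (q == r)%:R * W q q).

Lemma det_blowup_mx (W : 'M[R]_k) (x : R) : (forall q, x + W q q != 0) ->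
  \det (x%:M - blowup_mx W) * \prod_q (x + W q q)
  = \prod_q (x + W q q) ^+ cell q * \det (x%:M - quotient_mx W).
Proof.
move=> c_neq0; pose c q := x + W q q.
pose L := diag_mx (\row_i c (p i)); pose Li := diag_mx (\row_i (c (p i))^-1).
have LLi : L *m Li = 1%:M.
  by apply/matrixP => i j; rewrite mul_diag_mx !mxE mulrnAr mulfV ?c_neq0.
have xM : x%:M - blowup_mx W = L *m (1%:M - Li *m E *m (W *m E^T)).
  rewrite mulmxBr mulmx1 !mulmxA LLi mul1mx.
  apply/matrixP => i j.
  rewrite [(_ - E *m W *m E^T) i j]mxE [(- (E *m W *m E^T)) i j]mxE mulmx_incidence_tr !mxE.
  by case: eqVneq => [->|_]; rewrite /c ?mulr1n ?mulr0n ?subr0 ?sub0r // addrK.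
have detL : \det L = \prod_q c q ^+ cell q.
  rewrite det_diag (partition_big p xpredT) //=; apply: eq_bigr => q _.
  transitivity (\prod_(i | p i == q) c q).
    by apply: eq_bigr => i /eqP <-; rewrite mxE.
  by rewrite prodr_const.
have detc : \prod_q c q = \det (diag_mx (\row_q c q)).
  by rewrite det_diag; apply: eq_bigr => q _; rewrite mxE.
have ED : W *m E^T *m (Li *m E) = W *m diag_mx (\row_q ((cell q)%:R * (c q)^-1)).
  by rewrite -mulmxA [E^T *m _]mulmxA /Li (tr_incidence_diag_mulmx (fun q => (c q)^-1)).
rewrite xM det_mulmx detL det_1_sub_mulmxC ED -mulrA detc -det_mulmx.
congr (_ * \det _); rewrite [W *m _]mul_mx_diag mul_mx_diag.
apply/matrixP => q r; rewrite !mxE mulrBl -mulrA divfK ?c_neq0 //.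
by case: eqVneq => [->|_] /=; rewrite /c; ring.
Qed.

End EquitablePartition.

Lemma char_poly_blowup_mx (R : numFieldType) N k (p : 'I_N -> 'I_k) (W : 'M[R]_k) :
  (forall q, 0 < #|[pred i | p i == q]|)%N ->
  char_poly (blowup_mx p W)
  = \prod_q ('X + (W q q)%:P) ^+ #|[pred i | p i == q]|.-1 * char_poly (quotient_mx p W).
Proof.
move=> cell_gt0; apply: (@poly_eq_gt _ (\sum_(q < k) `|W q q|)) => x x_gt.
have x_gt0 : 0 < x by apply: le_lt_trans x_gt; rewrite sumr_ge0.
have c_neq0 q : x + W q q != 0.
  have Wq : `|W q q| < x.
    by apply: le_lt_trans x_gt; rewrite (bigD1 q) //= lerDl sumr_ge0.
  by rewrite addrC addr_eq0; apply: contraTneq Wq => ->; rewrite normrN gtr0_norm ?ltxx.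
have P_neq0 : \prod_(q < k) (x + W q q) != 0.
  by rewrite prodf_seq_neq0; apply/allP => q _; apply: c_neq0.
apply: (mulIf P_neq0).
rewrite hornerM !horner_char_poly det_blowup_mx // horner_prod.
under [in RHS]eq_bigr do rewrite horner_exp hornerD hornerX hornerC.
rewrite mulrAC -big_split /=; congr (_ * _); apply: eq_bigr => q _.
by rewrite -exprSr prednK.
Qed.

Local Close Scope ring_scope.

Section QuaternionGroup.

Variable n : nat.
Hypothesis n_gt1 : 1 < n.

Local Notation Q := (Qelt n).

Let n2_gt0 : 0 < n.*2. Proof. lia. Qed.

Definition qcentral (i : nat) : bool := (i == 0) || (i == n).

Definition qtype (g : Q) : nat :=
  if g.2 then (if odd g.1 then 3 else 2) else if qcentral g.1 then 0 else 1.

Lemma qtype_lt4 (g : Q) : qtype g < 4.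
Proof. by rewrite /qtype; case: g.2; [case: (odd _) | case: ifP]. Qed.

Lemma qmul_snd (g h : Q) : (qmul g h).2 = xorb g.2 h.2.
Proof. by case: g => ? ?; case: h. Qed.

Lemma eq_qmul (g h g' h' : Q) :
  (qmul g h == qmul g' h') =
  ((qmul g h).1 == (qmul g' h').1 :> nat) && (xorb g.2 h.2 == xorb g'.2 h'.2).
Proof. by rewrite -!qmul_snd; case: (qmul g h) => ? ?; case: (qmul g' h'). Qed.

Lemma qtype_conj (g h : Q) : qconj g h -> qtype g = qtype h.
Proof.
case: g => i j; case: h => k l; case/existsP => [[t m]].
rewrite eq_qmul => /andP [/eqP E /eqP jl].
have {}jl : j = l by clear E; move: jl; case: j; case: l; case: m.
subst l; suff: if j then odd i = odd k else qcentral i = qcentral k.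
  by rewrite /qtype /=; clear E; case: j => ->.
have hi := ltn_ord i; have hk := ltn_ord k; have ht := ltn_ord t.
move: E; rewrite /qcentral /=.
by case: j; case: m; rewrite /= ?addn0; case_modn n.*2 n2_gt0; lia.
Qed.

Lemma qconjxx (g : Q) : qconj g g.
Proof.
apply/existsP; exists (Ordinal n2_gt0, false).
case: g => i j; rewrite eq_qmul; have hi := ltn_ord i.
by case: j; rewrite /= ?andbT ?addn0 ?subn0 ?add0n //; case_modn n.*2 n2_gt0; lia.
Qed.

Lemma qconj_b (i k : 'I_(n.*2)) : odd i = odd k -> qconj (i, true) (k, true).
Proof.
move=> ik; have hi := ltn_ord i; have hk := ltn_ord k.
pose t := (if k <= i then i - k else i + n.*2 - k)./2.
have ht : t < n.*2 by rewrite /t; case: ifP => ?; lia.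
apply/existsP; exists (Ordinal ht, false); rewrite eq_qmul eqxx andbT /= addn0.
by rewrite /t; case: ifP => ?; case_modn n.*2 n2_gt0; lia.
Qed.

Lemma qcentral_commute (i : 'I_(n.*2)) (h : Q) :
  qcentral i -> qmul (i, false) h = qmul h (i, false).
Proof.
case: h => k l; rewrite /qcentral => iZ; apply/eqP; rewrite eq_qmul.
have hi := ltn_ord i; have hk := ltn_ord k.
by case: l; rewrite /= ?andbT ?addn0; case_modn n.*2 n2_gt0; lia.
Qed.

Lemma qcommute_rot (i k : 'I_(n.*2)) :
  qmul (i, false) (k, false) = qmul (k, false) (i, false).
Proof. by apply/eqP; rewrite eq_qmul /= !addn0 addnC !eqxx. Qed.

Lemma qcommute_rot_b (i k : 'I_(n.*2)) :
  qmul (i, false) (k, true) = qmul (k, true) (i, false) -> qcentral i.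
Proof.
move/eqP; rewrite eq_qmul /qcentral /= => /andP [+ _]; rewrite addn0.
have hi := ltn_ord i; have hk := ltn_ord k.
by case_modn n.*2 n2_gt0; lia.
Qed.

Lemma qcommute_b_even (i k : 'I_(n.*2)) : ~~ odd n ->
  qmul (i, true) (k, true) = qmul (k, true) (i, true) -> odd i = odd k.
Proof.
move=> n_even /eqP; rewrite eq_qmul /= => /andP [+ _].
have hi := ltn_ord i; have hk := ltn_ord k.
by case_modn n.*2 n2_gt0; lia.
Qed.

Lemma qcommute_b_odd (i : 'I_(n.*2)) : odd n ->
  exists k : 'I_(n.*2),
    odd k != odd i /\ qmul (i, true) (k, true) = qmul (k, true) (i, true).
Proof.
move=> n_odd; have hi := ltn_ord i.
exists (Ordinal (ltn_pmod (i + n) n2_gt0)); split.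
  by move: n_odd => /=; case_modn n.*2 n2_gt0; lia.
apply/eqP; rewrite eq_qmul eqxx andbT /=.
have -> : (i + n) %% n.*2 = if i < n then i + n else i - n.
  by case: ifP => ?; case_modn n.*2 n2_gt0; lia.
by case: ifP => ?; case_modn n.*2 n2_gt0; lia.
Qed.

Definition qtype_adj (q r : nat) : bool :=
  match q, r with
  | 1, 2 | 1, 3 | 2, 1 | 3, 1 => false
  | 2, 3 | 3, 2 => odd n
  | _, _ => true
  end.

Lemma qtype_adjxx q : qtype_adj q q.
Proof. by case: q => [|[|[|[|q]]]]. Qed.

Lemma qcommute_adj (g h : Q) :
  qmul g h = qmul h g -> qtype_adj (qtype g) (qtype h).
Proof.
case: g => i j; case: h => k l; case: j; case: l => gh; rewrite /qtype /=.
- have [n_odd|n_even] := boolP (odd n).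
    by case: (odd i); case: (odd k); rewrite /= ?n_odd.
  by rewrite (qcommute_b_even n_even gh); case: (odd k).
- by rewrite (qcommute_rot_b (esym gh)); case: (odd i).
- by rewrite (qcommute_rot_b gh); case: (odd k).
- by case: ifP; case: ifP.
Qed.

Lemma dcadj_qtype_adj (g h : Q) : dcadj g h -> qtype_adj (qtype g) (qtype h).
Proof.
case/andP=> _ /orP [/qtype_conj-> | ]; first exact: qtype_adjxx.
case/existsP=> g' /existsP [h' /and4P [gg' hh' _ /eqP g'h']].
by rewrite (qtype_conj gg') (qtype_conj hh'); apply: qcommute_adj.
Qed.

Lemma dcadj_commute (g h : Q) : g != h -> qmul g h = qmul h g -> dcadj g h.
Proof.
move=> gh comm; rewrite /dcadj gh; apply/orP; right.
by apply/existsP; exists g; apply/existsP; exists h; rewrite !qconjxx gh comm eqxx.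
Qed.

Lemma qtype_adj_dcadj (g h : Q) :
  g != h -> qtype_adj (qtype g) (qtype h) -> dcadj g h.
Proof.
case: g => i j; case: h => k l; rewrite /qtype /=.
case: j; case: l => gh.
- have [ik _|ik adj] := eqVneq (odd i) (odd k); first by rewrite /dcadj gh qconj_b.
  have n_odd : odd n by move: adj ik; case: (odd i); case: (odd k).
  have [k' [k'i comm]] := qcommute_b_odd i n_odd.
  apply/andP; split=> //; apply/orP; right; apply/existsP; exists (i, true).
  apply/existsP; exists (k', true); rewrite qconjxx qconj_b ?comm ?eqxx //=.
    by rewrite andbT; apply: contra k'i => /eqP [->].
  by move: ik k'i; case: (odd i); case: (odd k); case: (odd k').
- case kZ: (qcentral k); last by case: (odd i).
  by move=> _; apply: dcadj_commute; rewrite // -qcentral_commute.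
- case iZ: (qcentral i); last by case: (odd k).
  by move=> _; apply: dcadj_commute; rewrite // qcentral_commute.
- by move=> _; apply: dcadj_commute; rewrite // qcommute_rot.
Qed.

Lemma dcadjE (g h : Q) : dcadj g h = (g != h) && qtype_adj (qtype g) (qtype h).
Proof.
apply/idP/andP => [gh | [gh adj]]; last exact: qtype_adj_dcadj.
by split; [case/andP: gh | exact: dcadj_qtype_adj].
Qed.

Definition qtype_ord (g : Q) : 'I_4 := Ordinal (qtype_lt4 g).

Definition qtype_size (q : nat) : nat :=
  match q with 0 => 2 | 1 => 2 * n - 2 | _ => n end.

Lemma sum_qcentral : \sum_(i < n.*2) qcentral i = 2.
Proof.
have n_lt : n < n.*2 by lia.
rewrite (bigD1 (Ordinal n2_gt0)) // (bigD1 (Ordinal n_lt)) ?big1 /=.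
- by rewrite /qcentral !eqxx orbT; lia.
- move=> i /andP [ni0 nin]; rewrite /qcentral -!val_eqE /= in ni0 nin *.
  by rewrite (negPf ni0) (negPf nin).
- by rewrite -val_eqE /=; lia.
Qed.

Lemma sum_qtype (F : 'I_(n.*2) -> bool -> nat) :
  \sum_(g : Q) F g.1 g.2 = \sum_(i < n.*2) (F i true + F i false).
Proof. by rewrite -pair_bigA; apply: eq_bigr => i _; rewrite big_bool. Qed.

Lemma card_qtype (r : 'I_4) : #|[pred g : Q | qtype_ord g == r]| = qtype_size r.
Proof.
rewrite -sum1_card big_mkcond /=.
rewrite (sum_qtype (fun i b => if qtype_ord (i, b) == r then 1 else 0)).
under eq_bigr do rewrite -!val_eqE.
case: r => [[|[|[|[|r]]]] //= _].
- rewrite -sum_qcentral; apply: eq_bigr => i _.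
  by rewrite /qtype /=; case: (odd i); case: (qcentral i).
- transitivity (\sum_(i < n.*2) ~~ qcentral i).
    by apply: eq_bigr => i _; rewrite /qtype /=; case: (odd i); case: (qcentral i).
  by rewrite sum_negb_ord sum_qcentral; lia.
- transitivity (\sum_(i < n.*2) ~~ odd i).
    by apply: eq_bigr => i _; rewrite /qtype /=; case: (odd i); case: (qcentral i).
  by rewrite sum_negb_ord sum_odd_ord; lia.
- rewrite -[RHS](sum_odd_ord n); apply: eq_bigr => i _.
  by rewrite /qtype /=; case: (odd i); case: (qcentral i).
Qed.

Lemma sum_by_qtype (F : nat -> nat) :
  \sum_(h : Q) F (qtype h) = \sum_(r < 4) F r * qtype_size r.
Proof.
rewrite (partition_big qtype_ord xpredT) //=; apply: eq_bigr => r _.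
transitivity (\sum_(h | qtype_ord h == r) F r); first by apply: eq_bigr => h /eqP <-.
by rewrite sum_nat_const card_qtype mulnC.
Qed.

Definition qtype_deg (q : nat) : nat := (\sum_(r < 4) qtype_adj q r * qtype_size r).-1.

Lemma dcdegE (g : Q) : dcdeg g = qtype_deg (qtype g).
Proof.
rewrite /dcdeg /qtype_deg -(sum_by_qtype (qtype_adj (qtype g))) (bigD1 g) //=.
rewrite qtype_adjxx add1n /= -sum1_card big_mkcond [RHS]big_mkcond /=.
apply: eq_bigr => h _.
by rewrite inE dcadjE eq_sym; case: (h != g).
Qed.

Lemma qtype_deg_values :
  [/\ qtype_deg 0 = (4 * n - 1)%N, qtype_deg 1 = (2 * n - 1)%N,
      qtype_deg 2 = (if odd n then 2 * n + 1 else n + 1)%N &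
      qtype_deg 3 = (if odd n then 2 * n + 1 else n + 1)%N].
Proof.
rewrite /qtype_deg !big_ord_recr !big_ord0 /=.
by case: (odd n); split; lia.
Qed.

End QuaternionGroup.

Local Open Scope ring_scope.

Section SomborSpectrum.

Variables (R : rcfType) (n : nat).
Hypothesis n_gt1 : (1 < n)%N.

Local Notation Q := (Qelt n).
Local Notation c m := ((m%:R * Num.sqrt 2)%:P : {poly R}).

Definition sombor_w (q r : nat) : R :=
  if qtype_adj n q r
  then Num.sqrt ((qtype_deg n q)%:R ^+ 2 + (qtype_deg n r)%:R ^+ 2) else 0.

Definition sombor_wmx : 'M[R]_4 := \matrix_(q, r) sombor_w q r.

Definition qtype_idx (i : 'I_#|Q|) : 'I_4 := qtype_ord (enum_val i).

Lemma sombor_wC q r : sombor_w q r = sombor_w r q.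
Proof.
rewrite /sombor_w addrC.
by case: q => [|[|[|[|q]]]]; case: r => [|[|[|[|r]]]].
Qed.

Lemma sombor_wxx q : sombor_w q q = (qtype_deg n q)%:R * Num.sqrt 2.
Proof. by rewrite /sombor_w qtype_adjxx sqrt_sqr_double ?ler0n. Qed.

Lemma sombor_mx_blowup : sombor_mx R n = blowup_mx qtype_idx sombor_wmx.
Proof.
apply/matrixP => i j; rewrite !mxE dcadjE // !dcdegE // (inj_eq enum_val_inj).
by case: eqVneq.
Qed.

Lemma card_qtype_idx (q : 'I_4) :
  #|[pred i | qtype_idx i == q]| = qtype_size n q.
Proof.
rewrite -(card_qtype n_gt1 q) -[LHS]sum1_card -[RHS]sum1_card.
rewrite [RHS](reindex (fun i : 'I_#|Q| => enum_val i)) /=.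
  by apply: eq_bigl => i; rewrite !inE.
by apply: onW_bij; apply: enum_val_bij.
Qed.

Lemma char_poly_sombor_mx :
  char_poly (sombor_mx R n) =
  \prod_(q < 4) ('X + c (qtype_deg n q)) ^+ (qtype_size n q).-1
  * char_poly (quotient_mx qtype_idx sombor_wmx).
Proof.
rewrite sombor_mx_blowup char_poly_blowup_mx => [|q]; last first.
  by rewrite card_qtype_idx; case: q => [[|[|[|[|]]]]] //= _; lia.
by congr (_ * _); apply: eq_bigr => q _; rewrite card_qtype_idx mxE sombor_wxx.
Qed.

Definition sombor_char_entry (x : R) (q r : nat) : R :=
  (q == r)%:R * x - (qtype_size n r)%:R * sombor_w q r + (q == r)%:R * sombor_w q q.

Lemma sub_quotient_sombor (x : R) :
  x%:M - quotient_mx qtype_idx sombor_wmx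
  = \matrix_(q < 4, r < 4) sombor_char_entry x q r.
Proof.
apply/matrixP => q r; rewrite !mxE card_qtype_idx -!val_eqE /sombor_char_entry /=.
by rewrite -[x *+ _]mulr_natl; ring.
Qed.

Lemma char_poly_sombor_quot :
  char_poly (quotient_mx qtype_idx sombor_wmx) =
  if odd n then
    ('X + c (2 * n + 1)%N)
    * (('X - c (4 * n - 1)%N) * ('X - c ((2 * n - 1) * (2 * n - 3))%N)
         * ('X - c ((2 * n - 1) * (2 * n + 1))%N)
       - (8 * (n - 1) * (10 * n ^ 2 - 6 * n + 1))%:R%:P
         * ('X - c ((2 * n - 1) * (2 * n + 1))%N)
       - (8 * n * (10 * n ^ 2 - 2 * n + 1))%:R%:P
         * ('X - c ((2 * n - 1) * (2 * n - 3))%N))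
  else
    ('X - c (4 * n - 1)%N) * ('X - c ((n - 1) * (n + 1))%N) ^+ 2
      * ('X - c ((2 * n - 1) * (2 * n - 3))%N)
    - (8 * (n - 1) * (10 * n ^ 2 - 6 * n + 1))%:R%:P
      * ('X - c ((n - 1) * (n + 1))%N) ^+ 2
    - (4 * n * (17 * n ^ 2 - 6 * n + 2))%:R%:P
      * ('X - c ((2 * n - 3) * (2 * n - 1))%N) * ('X - c ((n - 1) * (n + 1))%N).
Proof.
apply: (@poly_eq_gt _ 0) => x _.
rewrite horner_char_poly sub_quotient_sombor.
do 4! rewrite !det_mx_col0 !big_ord_recl !big_ord0.
rewrite !det_mx00 /minor_fun /bump /sombor_char_entry /=.
rewrite (sombor_wC 1 0) (sombor_wC 2 0) (sombor_wC 3 0) (sombor_wC 3 2) !sombor_wxx.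
have [-> -> -> ->] := qtype_deg_values n_gt1; rewrite /sombor_w /=.
have [-> -> -> ->] := qtype_deg_values n_gt1; rewrite sqrt_sqr_double ?ler0n //.
(* The two irrational off-diagonal weights only enter through their squares. *)
have hu := sqr_sqrtr
  (addr_ge0 (sqr_ge0 (4 * n - 1)%:R) (sqr_ge0 (2 * n - 1)%:R : 0 <= _ :> R)).
have hv := sqr_sqrtr (addr_ge0 (sqr_ge0 (4 * n - 1)%:R)
  (sqr_ge0 (if odd n then 2 * n + 1 else n + 1)%N%:R : 0 <= _ :> R)).
rewrite (fun_if (horner^~ x)) !(hornerM, hornerD, hornerN, hornerX, hornerC, horner_exp).
case: (odd n) in hv *; rewrite !(natrD, natrM, natrX, natrB) in hu hv *; try nia.
- ring: hu hv.
- ring: hu hv.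
Qed.

End SomborSpectrum.

Theorem corollary4p8 (R : rcfType) (n : nat) (hn : (2 <= n)%N) :
  let s : R := Num.sqrt 2 in
  let c (m : nat) : {poly R} := (m%:R * s)%:P in
  (odd n ->
     char_poly (sombor_mx R n) =
       ('X + c (4 * n - 1)%N) * ('X + c (2 * n - 1)%N) ^+ (2 * n - 3)
       * ('X + c (2 * n + 1)%N) ^+ (2 * n - 1)
       * (('X - c (4 * n - 1)%N) * ('X - c ((2 * n - 1) * (2 * n - 3))%N)
            * ('X - c ((2 * n - 1) * (2 * n + 1))%N)
          - (8 * (n - 1) * (10 * n ^ 2 - 6 * n + 1))%:R%:P
            * ('X - c ((2 * n - 1) * (2 * n + 1))%N)
          - (8 * n * (10 * n ^ 2 - 2 * n + 1))%:R%:P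
            * ('X - c ((2 * n - 1) * (2 * n - 3))%N)))
  /\
  (~~ odd n ->
     char_poly (sombor_mx R n) =
       ('X + c (4 * n - 1)%N) * ('X + c (2 * n - 1)%N) ^+ (2 * n - 3)
       * ('X + c (n + 1)%N) ^+ (2 * n - 2)
       * (('X - c (4 * n - 1)%N) * ('X - c ((n - 1) * (n + 1))%N) ^+ 2
            * ('X - c ((2 * n - 1) * (2 * n - 3))%N)
          - (8 * (n - 1) * (10 * n ^ 2 - 6 * n + 1))%:R%:P
            * ('X - c ((n - 1) * (n + 1))%N) ^+ 2
          - (4 * n * (17 * n ^ 2 - 6 * n + 2))%:R%:P
            * ('X - c ((2 * n - 3) * (2 * n - 1))%N)
            * ('X - c ((n - 1) * (n + 1))%N))).
Proof.
move=> s c; rewrite /c /s (char_poly_sombor_mx R hn) (char_poly_sombor_quot R hn).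
rewrite !big_ord_recr big_ord0 /= mul1r expr1.
have [-> -> -> ->] := qtype_deg_values hn.
have -> : (2 * n - 2).-1 = (2 * n - 3)%N by lia.
split=> [n_odd | n_even].
- rewrite !ifT //.
  have exprnn (Y : {poly R}) : Y ^+ n.-1 * Y ^+ n.-1 * Y = Y ^+ (2 * n - 1).
    by rewrite -exprD -exprSr; congr (_ ^+ _); lia.
  by rewrite -[in RHS]exprnn !mulrA.
- rewrite !ifF ?(negbTE n_even) //.
  have exprnn (Y : {poly R}) : Y ^+ n.-1 * Y ^+ n.-1 = Y ^+ (2 * n - 2).
    by rewrite -exprD; congr (_ ^+ _); lia.
  by rewrite -[in RHS]exprnn !mulrA.
Qed.
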